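(* Let $p,q$ be distinct prime numbers and let $G=\langle a,s,t \mid sas^{-1}=a^p,\ tat^{-1}=a^q\rangle$. Then $C_G(t)=\langle t\rangle$, $C_G(s)=\langle s\rangle$, and for every integer $i\geq 0$ we have $C_G(st^i)=\langle st^i\rangle$.
   Context: For a group $G$ and $g\in G$, $C_G(g)=\{h\in G\mid gh=hg\}$ is the centraliser of $g$. *)

From mathcomp Require Import all_boot all_algebra.
Set Implicit Arguments.
Unset Strict Implicit.
Unset Printing Implicit Defensive.

Inductive gen := gA | gS | gT.

(* a letter is a generator together with a flag: true = inverse *)
Definition letter := (gen * bool)%type.
Definition word := seq letter.

Definition flip (x : letter) : letter := (x.1, ~~ x.2).

Definition wmul (u v : word) : word := u ++ v.
Definition winv (u : word) : word := rev (map flip u).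
Definition gword (g : gen) : word := [:: (g, false)].

Fixpoint wpow (u : word) (n : nat) : word :=
  match n with 0 => [::] | n'.+1 => u ++ wpow u n' end.

Definition wzpow (u : word) (z : int) : word :=
  match z with
  | Posz n => wpow u n
  | Negz n => wpow (winv u) n.+1
  end.

Definition relator (g : gen) (e : nat) : word :=
  [:: (g, false); (gA, false); (g, true)] ++ wpow [:: (gA, true)] e.

Inductive geq (p q : nat) : word -> word -> Prop :=
  | geq_refl u : geq p q u u
  | geq_sym u v : geq p q u v -> geq p q v u
  | geq_trans u v w : geq p q u v -> geq p q v w -> geq p q u w
  | geq_cancel u v (x : letter) : geq p q (u ++ [:: x; flip x] ++ v) (u ++ v)
  | geq_relS u v : geq p q (u ++ relator gS p ++ v) (u ++ v)
  | geq_relT u v : geq p q (u ++ relator gT q ++ v) (u ++ v).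

Definition centraliser_is_cyclic (p q : nat) (g : word) : Prop :=
  forall w : word, geq p q (wmul w g) (wmul g w) <-> exists n : int, geq p q w (wzpow g n).

From Pilot Require Import Defs.
From mathcomp Require Import all_boot all_order all_algebra zify.
From Stdlib Require Import Setoid Morphisms.
Import Order.TTheory GRing.Theory Num.Theory.
Set Implicit Arguments. Unset Strict Implicit. Unset Printing Implicit Defensive.

Local Open Scope ring_scope.

(* G is an HNN extension of the infinite cyclic group <a> with stable letters s and t, so
   every element has a unique Britton normal form a^k x_1 a^r_1 ... x_n a^r_n; we compute it
   by letting the letters act on normal forms from the left.  Let g be a positive word in s
   and t whose first letter does not recur, e.g. t, s or s t^i, and let w commute with g.  If
   appending g to the normal form of w cancels a syllable, then w g commutes with g and has a
   shorter normal form.  Otherwise the normal form of (w g) g just appends the syllables of g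
   to that of w g, and the normal form of g (w g) has as many syllables only if it is obtained
   by multiplying the a-exponent by a product of p's and q's and prepending g.  So the
   a-exponent vanishes and the syllable string commutes with g; as the first letter of g
   occurs only once in g, that string is a power of g. *)

Lemma cat_comm_flatten_nseq (T : eqType) (x : T) (s t : seq T) : x \notin s ->
  t ++ x :: s = (x :: s) ++ t -> exists j, t = flatten (nseq j (x :: s)).
Proof.
move=> xNs; set u := x :: s.
have [n] := ubnP (size t); elim: n t => [|n IHn] [|y t] // szt tu; first by exists 0%N.
have [le_ut | lt_tu] := leqP (size u) (size (y :: t)).
- rewrite -(cat_take_drop (size u) (y :: t)) -catA in tu *.
  have sz_take : size (take (size u) (y :: t)) = size u by rewrite size_takel.
  move/eqP: tu; rewrite eqseq_cat // => /andP[/eqP tk /eqP td].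
  rewrite tk in td *.
  have [|j ->] := IHn _ _ td; first by rewrite size_drop; move: szt le_ut => /=; lia.
  by exists j.+1.
- have := congr1 (nth x ^~ (size t).+1) tu.
  have lt_ts : (size t < size s)%N := lt_tu.
  rewrite nth_cat ltnn subnn /= nth_cat lt_ts => eqx.
  by rewrite eqx mem_nth in xNs.
Qed.

(** * Words modulo the defining relations *)

Section Presentation.
Variables p q : nat.
Local Notation Geq := (Defs.geq p q).
Local Notation "u =G v" := (Geq u v) (at level 70).

#[local] Hint Resolve geq_refl : core.

#[local] Instance geq_equiv : Equivalence Geq.
Proof. by split; [exact: geq_refl | exact: geq_sym | exact: geq_trans]. Qed.

Lemma geq_cat_ctx x y u v : u =G v -> x ++ u ++ y =G x ++ v ++ y.
Proof.
elim=> {u v} [u | u v _ IH | u v w _ IHuv _ IHvw | u v z | u v | u v].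
- reflexivity.
- by symmetry.
- by transitivity (x ++ v ++ y).
- by have := geq_cancel p q (x ++ u) (v ++ y) z; rewrite -!catA.
- by have := geq_relS p q (x ++ u) (v ++ y); rewrite -!catA.
- by have := geq_relT p q (x ++ u) (v ++ y); rewrite -!catA.
Qed.

#[local] Instance geq_cat : Proper (Geq ==> Geq ==> Geq) (@cat letter).
Proof.
move=> u u' eq_u v v' eq_v; transitivity (u' ++ v); first exact: (geq_cat_ctx [::] v eq_u).
by have := geq_cat_ctx u' [::] eq_v; rewrite !cats0.
Qed.

#[local] Instance geq_cons x : Proper (Geq ==> Geq) (cons x).
Proof. by move=> u v eq_uv; have := geq_cat_ctx [:: x] [::] eq_uv; rewrite !cats0. Qed.

Lemma flipK : involutive flip. Proof. by case=> g []. Qed.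

Lemma cons_flip_cancel x u : x :: flip x :: u =G u.
Proof. exact: (geq_cancel p q [::] u x). Qed.

Lemma flip_cons_cancel x u : flip x :: x :: u =G u.
Proof. by have := cons_flip_cancel (flip x) u; rewrite flipK. Qed.

Lemma cat_winv u : u ++ winv u =G [::].
Proof.
elim: u => [|x u IHu] /=; first reflexivity.
by rewrite /winv /= rev_cons -cats1 catA -/(winv u) IHu /= cons_flip_cancel.
Qed.

Lemma winv_cat u : winv u ++ u =G [::].
Proof.
elim: u => [|x u IHu] /=; first reflexivity.
by rewrite /winv /= rev_cons -cats1 -catA /= -/(winv u) flip_cons_cancel IHu.
Qed.

Lemma wpowSr u n : wpow u n.+1 = wpow u n ++ u.
Proof. by elim: n => [|n /= IHn]; rewrite /= ?cats0 // -catA -IHn. Qed.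

Lemma wpow_flatten u n : wpow u n = flatten (nseq n u).
Proof. by elim: n => //= n ->. Qed.

Lemma wzpow_winv u m : wzpow u m ++ winv u =G wzpow u (m - 1).
Proof.
case: m => [[|n]|n].
- have -> : 0%:Z - 1 = Negz 0 by lia.
  by rewrite /= cats0.
- have -> : n.+1%:Z - 1 = n%:Z by lia.
  by rewrite /= -/(wpow u n.+1) wpowSr -catA cat_winv cats0.
- have -> : Negz n - 1 = Negz n.+1 by lia.
  by rewrite /= -/(wpow (winv u) n.+2) [in X in _ =G X]wpowSr.
Qed.

Lemma wzpow_commute u n : wzpow u n ++ u =G u ++ wzpow u n.
Proof.
case: n => n /=; first by rewrite -wpowSr.
rewrite [in X in _ =G X]catA cat_winv -/(wpow (winv u) n.+1) wpowSr.
by rewrite -catA winv_cat cats0.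
Qed.

Lemma geq_catr_wzpow u w m : w ++ u =G wzpow u m -> w =G wzpow u (m - 1).
Proof. by move=> eq_wu; rewrite -wzpow_winv -eq_wu -catA cat_winv cats0. Qed.

Definition stable (b : bool) : gen := if b then gT else gS.
Definition rexp (b : bool) : nat := if b then q else p.
Definition rexpz (b : bool) : int := (rexp b)%:Z.

Definition stab b : letter := (stable b, false).
Definition stabV b : letter := (stable b, true).
Definition la : letter := (gA, false).
Definition laV : letter := (gA, true).
Definition apow (k : int) : word := wzpow [:: la] k.

Lemma apowD1 k : apow (k + 1) =G la :: apow k.
Proof.
case: k => [n | [|n]].
- by have -> : n%:Z + 1 = n.+1%:Z by lia.
- have -> : Negz 0 + 1 = 0%:Z by lia.
  by symmetry; exact: cons_flip_cancel.
- have -> : Negz n.+1 + 1 = Negz n by lia.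
  by symmetry; exact: cons_flip_cancel.
Qed.

Lemma apowB1 k : apow (k - 1) =G laV :: apow k.
Proof.
case: k => [[|n] | n].
- by have -> : 0%:Z - 1 = Negz 0 by lia.
- have -> : n.+1%:Z - 1 = n%:Z by lia.
  by symmetry; exact: (flip_cons_cancel la (apow n)).
- by have -> : Negz n - 1 = Negz n.+1 by lia.
Qed.

Lemma apowD m n : apow (m + n) =G apow m ++ apow n.
Proof.
elim/int_ind: m n => [|m IHm|m IHm] n; first by rewrite add0r.
- have -> : m.+1%:Z + n = (m%:Z + n) + 1 by lia.
  have -> : m.+1%:Z = m%:Z + 1 by lia.
  by rewrite !apowD1 IHm.
- have -> : - m.+1%:Z + n = (- m%:Z + n) - 1 by lia.
  have -> : - m.+1%:Z = - m%:Z - 1 by lia.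
  by rewrite !apowB1 IHm.
Qed.

Lemma relator_cancel b u : relator (stable b) (rexp b) ++ u =G u.
Proof. by case: b; [apply: (geq_relT p q [::] u) | apply: (geq_relS p q [::] u)]. Qed.

Lemma stab_la b u : stab b :: la :: u =G apow (rexpz b) ++ stab b :: u.
Proof.
rewrite -[X in _ =G X](relator_cancel b) /relator -!catA /=.
have laVK n v : wpow [:: laV] n ++ wpow [:: la] n ++ v =G v.
  elim: n => // n IHn; rewrite [wpow [:: laV] _]wpowSr -catA /=.
  by rewrite (flip_cons_cancel la).
by rewrite laVK (flip_cons_cancel (stab b)).
Qed.

Lemma stab_apow b k u : stab b :: apow k ++ u =G apow (k * rexpz b) ++ stab b :: u.
Proof.
elim/int_ind: k u => [|k IHk|k IHk] u; first by rewrite mul0r.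
- have -> : k.+1%:Z * rexpz b = rexpz b + k%:Z * rexpz b.
    by rewrite intS mulrDl mul1r.
  by rewrite /= stab_la IHk catA -apowD.
- have -> : (- k.+1%:Z) * rexpz b = - rexpz b + (- k%:Z) * rexpz b.
    by rewrite -addn1 PoszD opprD mulrDl addrC mulN1r.
  have -> : - k.+1%:Z = - k%:Z - 1 by lia.
  have stab_laV v : stab b :: laV :: v =G apow (- rexpz b) ++ stab b :: v.
    by rewrite -[in X in _ =G X](cons_flip_cancel la v) stab_la catA -apowD addNr.
  by rewrite apowB1 /= stab_laV apowD -catA -IHk.
Qed.

Lemma stabV_apow b k u : stabV b :: apow (k * rexpz b) ++ u =G apow k ++ stabV b :: u.
Proof.
rewrite -[in X in _ =G X](flip_cons_cancel (stab b) (apow k ++ _)) stab_apow.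
by rewrite (cons_flip_cancel (stab b)).
Qed.

Hypotheses (p_gt1 : (1 < p)%N) (q_gt1 : (1 < q)%N).

Lemma rexpz_gt1 b : 1 < rexpz b. Proof. by case: b; rewrite ltz_nat. Qed.
Lemma rexpz_gt0 b : 0 < rexpz b. Proof. exact: lt_trans (rexpz_gt1 b). Qed.
Lemma rexpz_neq0 b : rexpz b != 0. Proof. by rewrite gt_eqF ?rexpz_gt0. Qed.

Lemma divz_rexp b k r : 0 <= r < rexpz b ->
  ((k * rexpz b + r) %/ rexpz b)%Z = k /\ ((k * rexpz b + r) %% rexpz b)%Z = r.
Proof.
move=> r_bd; rewrite divzMDl ?rexpz_neq0 // divz_small // addr0.
by rewrite modzMDl modz_small.
Qed.

Lemma modz_rexp_bounds b k : 0 <= (k %% rexpz b)%Z < rexpz b.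
Proof. by rewrite modz_ge0 ?rexpz_neq0 // ltz_pmod // rexpz_gt0. Qed.

(** * Britton normal forms *)

(* The syllable (b, e, r) stands for the word (s_b)^(+-1) a^r, the sign being - iff e,
   where s_false = s and s_true = t; the pair (k, L) stands for a^k followed by the
   syllables of L.  In a reduced sequence positive syllables carry no power of a,
   negative ones a residue modulo the exponent of their relator, and no s_b s_b^-1 or
   s_b^-1 s_b occurs: these are Britton's normal forms for the HNN extension. *)
Definition syllable := (bool * bool * int)%type.
Definition pos_syl b : syllable := (b, false, 0).

Definition syl_word (e : syllable) : word := let: (b, i, r) := e in (stable b, i) :: apow r.
Definition nf_word (n : int * seq syllable) : word :=
  apow n.1 ++ flatten (map syl_word n.2).

Definition syl_ok (e : syllable) :=
  let: (b, i, r) := e in if i then 0 <= r < rexpz b else r == 0.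
Definition no_pinch (e e' : syllable) :=
  let: (b1, i1, r1) := e in let: (b2, i2, _) := e' in ~~ [&& b1 == b2, i1 != i2 & r1 == 0].
Fixpoint reduced (L : seq syllable) : bool :=
  if L is e :: L' then
    [&& syl_ok e, reduced L' & if L' is e' :: _ then no_pinch e e' else true]
  else true.

Definition lmul_stab b (k : int) (L : seq syllable) : int * seq syllable :=
  match L with
  | (b', true, r) :: L' =>
      if b' == b then (k * rexpz b + r, L') else (k * rexpz b, pos_syl b :: L)
  | _ => (k * rexpz b, pos_syl b :: L)
  end.

Definition starts_with_stab b (L : seq syllable) : bool :=
  if L is (b', false, _) :: _ then b' == b else false.

Definition lmul_stabV b (k : int) (L : seq syllable) : int * seq syllable :=
  let r := (k %% rexpz b)%Z in
  ((k %/ rexpz b)%Z,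
   if (r == 0) && starts_with_stab b L then behead L else (b, true, r) :: L).

Definition lmul_letter (x : letter) (n : int * seq syllable) : int * seq syllable :=
  let: (k, L) := n in
  match x with
  | (gA, false) => (k + 1, L)
  | (gA, true) => (k - 1, L)
  | (gS, false) => lmul_stab false k L
  | (gS, true) => lmul_stabV false k L
  | (gT, false) => lmul_stab true k L
  | (gT, true) => lmul_stabV true k L
  end.

Definition lmul_word (w : word) n := foldr lmul_letter n w.
Definition nf (w : word) := lmul_word w (0, [::]).

Lemma lmul_letter_stab b n : lmul_letter (stab b) n = lmul_stab b n.1 n.2.
Proof. by case: b; case: n. Qed.

Lemma lmul_letter_stabV b n : lmul_letter (stabV b) n = lmul_stabV b n.1 n.2.
Proof. by case: b; case: n. Qed.

Lemma lmul_word_cat u v n : lmul_word (u ++ v) n = lmul_word u (lmul_word v n).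
Proof. exact: foldr_cat. Qed.

Lemma nf_word_lmul_stab b k L : nf_word (lmul_stab b k L) =G stab b :: nf_word (k, L).
Proof.
rewrite /nf_word /= stab_apow.
case: L => [|[[b' []] r] L] //=; case: eqP => [->|] //=.
by rewrite -[(stable b, true)]/(flip (stab b)) cons_flip_cancel catA -apowD.
Qed.

Lemma nf_word_lmul_stabV b k L :
  reduced L -> nf_word (lmul_stabV b k L) =G stabV b :: nf_word (k, L).
Proof.
move=> redL; rewrite /nf_word /= [in apow k](divz_eq k (rexpz b)) apowD -catA stabV_apow.
case: ifP => [/andP[/eqP -> starts] | _] //.
case: L redL starts => [|[[b' []] r] L] //= /and3P[/eqP -> _ _] /eqP ->.
by rewrite -[(stable b, false)]/(flip (stabV b)) cons_flip_cancel.
Qed.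

Lemma nf_word_lmul_letter x n : reduced n.2 -> nf_word (lmul_letter x n) =G x :: nf_word n.
Proof.
case: n => k L /= redL; case: x => [[] []].
- by rewrite /nf_word /= apowB1.
- by rewrite /nf_word /= apowD1.
- exact: (nf_word_lmul_stabV false).
- exact: (nf_word_lmul_stab false).
- exact: (nf_word_lmul_stabV true).
- exact: (nf_word_lmul_stab true).
Qed.

Lemma reduced_lmul_stab b k L : reduced L -> reduced (lmul_stab b k L).2.
Proof.
case: L => [|[[b' []] r] L] //= redL; last by rewrite redL andbF.
case: eqP => [_|neq_b] /=; first by case/and3P: redL.
by rewrite redL eqxx andbT; apply/eqP => /esym.
Qed.

Lemma reduced_lmul_stabV b k L : reduced L -> reduced (lmul_stabV b k L).2.
Proof.
move=> redL; rewrite /lmul_stabV /=; case: ifP => [/andP[_ starts] | no_cancel].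
  by case: L redL starts => [|[[b' []] r] L] //= /and3P[].
rewrite /= modz_rexp_bounds redL.
case: L {redL} no_cancel => [|[[b' []] r'] L] //= /negbT; rewrite ?andbF //.
by case: (_ == 0); rewrite ?andbF ?andbT // eq_sym.
Qed.

Lemma reduced_lmul_word w n : reduced n.2 -> reduced (lmul_word w n).2.
Proof.
elim: w => [|x w IHw] //= /IHw; case: (lmul_word w n) => k L /= redL.
by case: x => [[] []] //=; [exact: reduced_lmul_stabV | exact: reduced_lmul_stab
                           | exact: reduced_lmul_stabV | exact: reduced_lmul_stab].
Qed.

Lemma geq_nf_word w : w =G nf_word (nf w).
Proof.
elim: w => [|x w IHw] //=.
by rewrite nf_word_lmul_letter ?reduced_lmul_word // -IHw.
Qed.

Lemma lmul_stabK b k L :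
  reduced L -> lmul_stab b (lmul_stabV b k L).1 (lmul_stabV b k L).2 = (k, L).
Proof.
rewrite /lmul_stabV /=; set r := (k %% rexpz b)%Z => redL.
have ek : (k %/ rexpz b)%Z * rexpz b + r = k by rewrite -divz_eq.
case: ifP => [/andP[/eqP r0 starts] | _]; last by rewrite /= eqxx ek.
have ejk : (k %/ rexpz b)%Z * rexpz b = k by rewrite -[RHS]ek r0 addr0.
case: L redL starts => [|[[b' []] r'] L] //= redL /eqP eq_b; subst b'.
case/and3P: redL => /eqP -> _; case: L => [|[[b2 []] r2] L] /=; rewrite ?ejk //.
by rewrite eqxx andbT eq_sym => /negbTE ->.
Qed.

Lemma lmul_stabVK b k L :
  reduced L -> lmul_stabV b (lmul_stab b k L).1 (lmul_stab b k L).2 = (k, L).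
Proof.
have [div_km mod_km] : ((k * rexpz b) %/ rexpz b)%Z = k /\ ((k * rexpz b) %% rexpz b)%Z = 0.
  by rewrite -[k * rexpz b]addr0; apply: divz_rexp; rewrite lexx rexpz_gt0.
case: L => [|[[b' []] r] L] redL; rewrite /lmul_stabV /= ?div_km ?mod_km ?eqxx //.
case: eqP => [eq_b|] /=; rewrite ?div_km ?mod_km ?eqxx //; subst b'.
case/and3P: redL => r_bd _ no_pinch_L; have [-> ->] := divz_rexp k r_bd.
case: ifP => // /andP[/eqP r0]; rewrite r0 in no_pinch_L.
by case: L no_pinch_L => [|[[b2 []] r2] L] //=; rewrite eqxx andbT eq_sym => /negbTE ->.
Qed.

Lemma lmul_letter_flipK x n : reduced n.2 -> lmul_letter x (lmul_letter (flip x) n) = n.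
Proof.
case: n => k L redL; case: x => [[] []]; try by rewrite /= ?addrK ?subrK.
- rewrite -[flip _]/(stab false) (lmul_letter_stabV false) lmul_letter_stab.
  exact: lmul_stabVK.
- rewrite -[flip _]/(stabV false) (lmul_letter_stab false) lmul_letter_stabV.
  exact: lmul_stabK.
- rewrite -[flip _]/(stab true) (lmul_letter_stabV true) lmul_letter_stab.
  exact: lmul_stabVK.
- rewrite -[flip _]/(stabV true) (lmul_letter_stab true) lmul_letter_stabV.
  exact: lmul_stabK.
Qed.

Lemma lmul_stabV_subr b k L :
  lmul_stabV b (k - rexpz b) L = ((lmul_stabV b k L).1 - 1, (lmul_stabV b k L).2).
Proof.
have -> : k - rexpz b = -1 * rexpz b + k by rewrite mulN1r addrC.
by rewrite /lmul_stabV divzMDl ?rexpz_neq0 // modzMDl addrC.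
Qed.

Lemma lmul_word_relator b n : reduced n.2 -> lmul_word (relator (stable b) (rexp b)) n = n.
Proof.
case: n => k L redL.
have laV_pow m : lmul_word (wpow [:: laV] m) (k, L) = (k - m%:Z, L).
  by elim: m => [|m /= ->]; rewrite ?subr0 // -addn1 PoszD opprD addrA.
rewrite /relator lmul_word_cat laV_pow.
change (lmul_letter (stab b) (lmul_letter la (lmul_letter (stabV b) (k - rexpz b, L))) = (k, L)).
rewrite lmul_letter_stabV lmul_stabV_subr.
by rewrite [lmul_letter la _]/= subrK lmul_letter_stab lmul_stabK.
Qed.

Lemma lmul_word_geq u v : u =G v -> forall n, reduced n.2 -> lmul_word u n = lmul_word v n.
Proof.
elim=> {u v} [//|u v _ IH n redn|u v w _ IHuv _ IHvw n redn|u v x n redn|u v n redn|u v n redn].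
- by rewrite IH.
- by rewrite IHuv // IHvw.
- by rewrite !lmul_word_cat /= lmul_letter_flipK // reduced_lmul_word.
- have := lmul_word_relator false (reduced_lmul_word v redn).
  by rewrite !lmul_word_cat => ->.
- have := lmul_word_relator true (reduced_lmul_word v redn).
  by rewrite !lmul_word_cat => ->.
Qed.

Lemma nf_geq u v : u =G v -> nf u = nf v.
Proof. by move=> eq_uv; apply: lmul_word_geq. Qed.

(** * Right multiplication by stable letters *)

Definition is_stabV0 b (e : syllable) := let: (b', i, r) := e in [&& b' == b, i & r == 0].

Fixpoint rmul_syls b (L : seq syllable) : seq syllable :=
  match L with
  | [::] => [:: pos_syl b]
  | [:: e] => if is_stabV0 b e then [::] else [:: e; pos_syl b]
  | e :: L' => e :: rmul_syls b L'
  end.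

Definition rmul_stab b (n : int * seq syllable) := (n.1, rmul_syls b n.2).

Lemma lmul_stab_rmul b' b k L : lmul_stab b' k (rmul_syls b L) = rmul_stab b (lmul_stab b' k L).
Proof.
case: L => [|[[b1 i1] r1] [|e2 L]] /=; last by case: i1; case: (b1 == b').
- by case: b b' => [] [].
- case: (r1 =P 0) => [->|/eqP r1_neq0];
    by case: b b' b1 i1 => [] [] [] [] //=; rewrite /rmul_stab /= ?addr0 ?(negbTE r1_neq0).
Qed.

Lemma lmul_stabV_rmul b' b k L : lmul_stabV b' k (rmul_syls b L) = rmul_stab b (lmul_stabV b' k L).
Proof.
rewrite /lmul_stabV /rmul_stab /=; congr pair; move: (k %% rexpz b')%Z => r.
case: L => [|[[b1 i1] r1] [|e2 L]] /=; last by case: i1; case: (_ && _).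
- by case: (r =P 0) => [->|/eqP/negbTE r_neq0]; case: b b' => [] [] //=; rewrite ?r_neq0.
- case: (r =P 0) => [->|/eqP/negbTE r_neq0]; case: (r1 =P 0) => [->|/eqP/negbTE r1_neq0];
    by case: b b' b1 i1 => [] [] [] [] //=; rewrite ?r_neq0 ?r1_neq0.
Qed.

Lemma lmul_letter_rmul x b n : lmul_letter x (rmul_stab b n) = rmul_stab b (lmul_letter x n).
Proof. by case: n => k L; case: x => [[] []] /=; rewrite ?lmul_stab_rmul ?lmul_stabV_rmul. Qed.

Lemma nf_rcons_stab w b : nf (w ++ [:: stab b]) = rmul_stab b (nf w).
Proof.
elim: w => [|x w IHw]; first by case: b; rewrite /nf /= mul0r.
by rewrite /nf /= -/(nf _) IHw lmul_letter_rmul.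
Qed.

Definition stab_word (bs : seq bool) : word := map stab bs.
Definition pos_syls (bs : seq bool) : seq syllable := map pos_syl bs.
Definition rmul_stabs (bs : seq bool) (L : seq syllable) := foldl (fun L b => rmul_syls b L) L bs.
Definition ends_pos (L : seq syllable) := exists M b, L = rcons M (pos_syl b).

Lemma nf_cat_stab_word bs w : nf (w ++ stab_word bs) = ((nf w).1, rmul_stabs bs (nf w).2).
Proof.
elim: bs w => [|b bs IHbs] w /=; first by rewrite cats0; case: (nf w).
by rewrite -cat_rcons -cats1 IHbs nf_rcons_stab.
Qed.

Lemma lmul_stab_cases b k L :
  lmul_stab b k L = (k * rexpz b, pos_syl b :: L) \/ (size (lmul_stab b k L).2).+1 = size L.
Proof. by case: L => [|[[b' []] r] L] /=; [left | case: (b' == b); [right | left] | left]. Qed.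

Lemma lmul_stab_word_size bs k L :
  (size (lmul_word (stab_word bs) (k, L)).2 <= size L + size bs)%N /\
  ((size (lmul_word (stab_word bs) (k, L)).2 = size L + size bs)%N ->
   lmul_word (stab_word bs) (k, L) = (k * \prod_(b <- bs) rexpz b, pos_syls bs ++ L)).
Proof.
elim: bs => [|b bs [IHle IHeq]] /=; first by rewrite addn0 big_nil mulr1.
rewrite lmul_letter_stab big_cons addnS.
move: IHle IHeq; case: (lmul_word (stab_word bs) (k, L)) => k' L' /= IHle IHeq.
case: (lmul_stab_cases b k' L') => [-> | shrinks] /=.
- split=> [|[/IHeq [-> ->]]]; first exact: IHle.
  by rewrite (mulrC (rexpz b)) mulrA.
- move: IHle; rewrite -shrinks => IHle.
  by split=> [|sz]; [lia | exfalso; lia].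
Qed.

Lemma rmul_syls_rcons b M e :
  rmul_syls b (rcons M e) = if is_stabV0 b e then M else rcons (rcons M e) (pos_syl b).
Proof.
elim: M => [|x M IHM] //=; rewrite IHM.
by case: M {IHM} => [|y M] /=; case: (is_stabV0 b e).
Qed.

Lemma ends_pos_rcons M b : ends_pos (rcons M (pos_syl b)).
Proof. by exists M, b. Qed.

Lemma ends_pos_cat L bs : ends_pos L -> ends_pos (L ++ pos_syls bs).
Proof.
case/lastP: bs => [|bs b]; first by rewrite cats0.
by rewrite /pos_syls map_rcons -rcons_cat => _; apply: ends_pos_rcons.
Qed.

Lemma rmul_stabs_pos bs L : L = [::] \/ ends_pos L -> rmul_stabs bs L = L ++ pos_syls bs.
Proof.
elim: bs L => [|b bs IHbs] L endL /=; first by rewrite cats0.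
have -> : rmul_syls b L = rcons L (pos_syl b).
  by case: endL => [-> | [M [b' ->]]] //; rewrite rmul_syls_rcons /= andbF.
by rewrite IHbs -?cat_rcons //; right; apply: ends_pos_rcons.
Qed.

Lemma rmul_stabs_cases bs L :
  bs != [::] -> (size (rmul_stabs bs L) < size L)%N \/ ends_pos (rmul_stabs bs L).
Proof.
elim: bs L => [|b bs IHbs] L // _ /=.
case/lastP: L => [|M e].
  right; rewrite rmul_stabs_pos; last by right; apply: (ends_pos_rcons [::]).
  exact/ends_pos_cat/(ends_pos_rcons [::]).
rewrite rmul_syls_rcons; case: (is_stabV0 b e).
  case: bs IHbs => [|b2 bs] IHbs /=; first by left; rewrite size_rcons.
  by case: (IHbs M isT) => [lt_M|]; [left; rewrite size_rcons ltnW | right].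
right; rewrite rmul_stabs_pos; last by right; apply: ends_pos_rcons.
exact/ends_pos_cat/ends_pos_rcons.
Qed.

Lemma nf_word_pow bs j : nf_word (0, flatten (nseq j (pos_syls bs))) = wpow (stab_word bs) j.
Proof.
rewrite /nf_word /= wpow_flatten.
elim: j => //= j <-; rewrite map_cat flatten_cat.
by congr (_ ++ _); elim: bs {j} => //= b bs ->.
Qed.

(** * Centralisers of positive words *)

Lemma prod_rexpz_gt1 b bs : 1 < \prod_(c <- b :: bs) rexpz c.
Proof.
rewrite big_cons; apply: (lt_le_trans (rexpz_gt1 b)); apply: ler_peMr; first exact/ltW/rexpz_gt0.
elim: bs => [|c bs IHbs]; first by rewrite big_nil.
by rewrite big_cons; apply: mulr_ege1 => //; apply/ltW/rexpz_gt1.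
Qed.

Section Centraliser.
Variables (h : bool) (bs : seq bool).
Hypothesis h_notin : h \notin bs.
Local Notation g := (stab_word (h :: bs)).

Lemma commuting_ends_pos_pow v :
  v ++ g =G g ++ v -> ends_pos (nf v).2 -> exists j, v =G wpow g j.
Proof.
move=> comm_v; have := nf_geq comm_v; have := geq_nf_word v.
rewrite nf_cat_stab_word /nf lmul_word_cat -/(nf v).
case: (nf v) => k L eq_v + endL; rewrite (rmul_stabs_pos _ (or_intror endL)) => eq_nf.
have sz : size (L ++ pos_syls (h :: bs)) = (size L + size (h :: bs))%N.
  by rewrite size_cat /pos_syls size_map.
have [_] := lmul_stab_word_size (h :: bs) k L; rewrite -eq_nf => /(_ sz) [ek eL].
have k0 : k = 0.
  have : k * (\prod_(c <- h :: bs) rexpz c - 1) == 0 by rewrite mulrBr mulr1 -ek subrr.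
  by rewrite mulf_eq0 subr_eq0 (gt_eqF (prod_rexpz_gt1 h bs)) orbF => /eqP.
have pos_h_notin : pos_syl h \notin pos_syls bs by rewrite mem_map // => ? ? [].
have [j eL_pow] := cat_comm_flatten_nseq pos_h_notin eL.
exists j; rewrite eq_v k0 eL_pow -[pos_syl h :: pos_syls bs]/(pos_syls (h :: bs)).
by rewrite nf_word_pow.
Qed.

Theorem centraliser_stab_word : centraliser_is_cyclic p q g.
Proof.
move=> w; split; last by case=> n ->; apply: wzpow_commute.
rewrite /wmul; have [N] := ubnP (size (nf w).2); elim: N w => [|N IHN] w // sz_w comm_w.
have comm_wg : (w ++ g) ++ g =G g ++ (w ++ g) by rewrite {1}comm_w catA.
have [shrinks | endp] := rmul_stabs_cases (nf w).2 (isT : h :: bs != [::]).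
- have [|m eq_m] := IHN (w ++ g) _ comm_wg; last by exists (m - 1); apply: geq_catr_wzpow.
  by rewrite nf_cat_stab_word /=; apply: leq_trans shrinks _.
- have [|j eq_j] := commuting_ends_pos_pow comm_wg; first by rewrite nf_cat_stab_word.
  by exists (j%:Z - 1); apply: geq_catr_wzpow.
Qed.

End Centraliser.
End Presentation.

Theorem lemma3p2 (p q : nat) (hp : prime p) (hq : prime q) (hpq : p != q) :
  centraliser_is_cyclic p q (gword gT) /\
  centraliser_is_cyclic p q (gword gS) /\
  (forall i : nat, centraliser_is_cyclic p q (wmul (gword gS) (wpow (gword gT) i))).
Proof.
have [p_gt1 q_gt1] := (prime_gt1 hp, prime_gt1 hq).
split; [|split].
- exact: (centraliser_stab_word p_gt1 q_gt1 (isT : true \notin [::])).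
- exact: (centraliser_stab_word p_gt1 q_gt1 (isT : false \notin [::])).
- move=> i; have -> : wmul (gword gS) (wpow (gword gT) i) = stab_word (false :: nseq i true).
    by rewrite /stab_word /= map_nseq; congr cons; elim: i => //= i ->.
  by apply: centraliser_stab_word; rewrite ?mem_nseq ?andbF.
Qed.
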